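(* Let $a\in\mathcal{T}_n\setminus\mathcal{S}_n$ with $\operatorname{rank}(a)=k$ and kernel of type $\lambda$, and let $G\le\mathcal{S}_n$. Then $(a,G)$ is an $\mathcal{S}_n$-pair if and only if $G$ is $k$-homogeneous and $G$ is $\lambda$-homogeneous.
   Context: $\Omega=\{1,\ldots,n\}$, $\mathcal{T}_n$ is the monoid of all maps $\Omega\to\Omega$, $\mathcal{S}_n$ the symmetric group. $\operatorname{rank}(a)=|\Omega a|$; the kernel of $a$ is the partition of $\Omega$ into the classes of $\{(x,y):xa=ya\}$, and its type is the non-increasing list of class sizes. $(a,G)$ is an $\mathcal{S}_n$-pair if $\langle a,G\rangle\setminus G=\langle a,\mathcal{S}_n\rangle\setminus\mathcal{S}_n$ (this notion is defined for non-invertible $a$). $G$ is $k$-homogeneous if transitive on $k$-subsets of $\Omega$. For a partition $\lambda$ of $n$, $G$ is $\lambda$-homogeneous if for any two ordered partitions $(A_1,A_2,\ldots)$, $(B_1,B_2,\ldots)$ of $\Omega$ with $|A_i|=|B_i|=\lambda_i$ there is $g\in G$ mapping the set of parts $\{A_1,A_2,\ldots\}$ onto $\{B_1,B_2,\ldots\}$. *)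

From mathcomp Require Import all_boot all_fingroup.
Set Implicit Arguments. Unset Strict Implicit. Unset Printing Implicit Defensive.

(* Omega = 'I_n ; T_n = {ffun 'I_n -> 'I_n} ; S_n = {perm 'I_n}.
   Maps act on the right: x (f g) = (x f) g. *)

Definition tmap n := {ffun 'I_n -> 'I_n}.

Definition tmul n (f g : tmap n) : tmap n := [ffun x => g (f x)].

Definition perm_tmap n (p : {perm 'I_n}) : tmap n := [ffun x => p x].

Definition in_perms n (G : {set {perm 'I_n}}) (f : tmap n) : Prop :=
  exists2 g, g \in G & f = perm_tmap g.

Inductive sgen n (a : tmap n) (G : {set {perm 'I_n}}) : tmap n -> Prop :=
| sgen_a : sgen a G a
| sgen_G g : g \in G -> sgen a G (perm_tmap g)
| sgen_mul f h : sgen a G f -> sgen a G h -> sgen a G (tmul f h).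

Definition Sn_pair n (a : tmap n) (G : {set {perm 'I_n}}) : Prop :=
  forall f : tmap n,
    (sgen a G f /\ ~ in_perms G f) <->
    (sgen a [set: {perm 'I_n}] f /\ ~ in_perms [set: {perm 'I_n}] f).

Definition rank n (a : tmap n) : nat := #|[set a x | x : 'I_n]|.

Definition kernel n (a : tmap n) : {set {set 'I_n}} :=
  [set [set y | a y == a x] | x : 'I_n].
Definition kernel_type n (a : tmap n) : seq nat :=
  sort geq [seq #|A| | A : {set 'I_n} <- enum (kernel a)].

Definition k_homogeneous n (G : {set {perm 'I_n}}) (k : nat) : Prop :=
  forall A B : {set 'I_n}, #|A| = k -> #|B| = k ->
    exists2 g, g \in G & [set g x | x in A] = B.

Definition ordered_partition_of_type n (lam : seq nat) (As : seq {set 'I_n}) : Prop :=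
  [/\ size As = size lam,
      forall i, i < size As -> #|nth set0 As i| = nth 0 lam i,
      forall i j, i < size As -> j < size As -> i != j ->
        [disjoint nth set0 As i & nth set0 As j] &
      forall x : 'I_n, exists2 A, A \in As & x \in A].

Definition lambda_homogeneous n (G : {set {perm 'I_n}}) (lam : seq nat) : Prop :=
  forall As Bs : seq {set 'I_n},
    ordered_partition_of_type lam As -> ordered_partition_of_type lam Bs ->
    exists2 g, g \in G &
      [set [set g x | x in A] | A : {set 'I_n} in As] = [set B : {set 'I_n} in Bs].

From mathcomp Require Import all_boot all_fingroup.
Set Implicit Arguments. Unset Strict Implicit. Unset Printing Implicit Defensive.

(* If (a,G) is an S_n-pair, every s a t with s, t in S_n lies in <a,G> \ G, hence
   factors as (g a) x and as x (a h) with g, h in G: comparing images gives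
   k-homogeneity, comparing kernels gives lambda-homogeneity.
   Conversely, lambda-homogeneity makes every partition of type lambda the kernel
   of some g a with g in G, and k-homogeneity maps im a onto any k-set I, so a
   power of g a h is the retraction of Omega onto I along that partition. Such
   retractions move one point of a k-set at a time; composing moves realizes
   every injection of a k-set into Omega, so s a t = g a w with w in <a,G>, and
   <a,S_n> \ S_n is contained in <a,G>. *)

Section FiniteSets.
Variable T : finType.
Implicit Types (X Y I : {set T}) (p : {perm T}).

Lemma imset_perm_tperm p X Y x y :
  p @: X = Y -> x \notin X -> y \notin Y -> (p * tperm (p x) y)%g @: (x |: X) = y |: Y.
Proof.
move=> pXY xX yY; rewrite imsetU1 permM tpermL; congr (_ |: _).
rewrite -pXY; apply: eq_in_imset => z zX; rewrite permM tpermD //.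
  by rewrite (inj_eq perm_inj); apply: contraNneq xX => ->.
by apply: contraNneq yY => ->; rewrite -pXY imset_f.
Qed.

Lemma perm_imset_eq X Y : #|X| = #|Y| -> exists p : {perm T}, p @: X = Y.
Proof.
have [m] := ubnP #|X|; elim: m X Y => // m IH X Y ltXm eqXY.
have [X0 | [x xX]] := set_0Vmem X.
  exists 1%g; rewrite imset_perm1 X0; apply/esym/cards0_eq.
  by rewrite -eqXY X0 cards0.
have [y yY] : exists y, y \in Y.
  by apply/card_gt0P; rewrite -eqXY card_gt0; apply/set0Pn; exists x.
have ltm : #|X :\ x| < m by move: ltXm; rewrite (cardsD1 x) xX.
have eqD : #|X :\ x| = #|Y :\ y|.
  by move: eqXY; rewrite (cardsD1 x X) (cardsD1 y Y) xX yY => /addnI.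
have [p pXY] := IH _ _ ltm eqD.
exists (p * tperm (p x) y)%g; rewrite -(setD1K xX) -(setD1K yY).
by apply: imset_perm_tperm; rewrite ?setD11.
Qed.

Lemma perm_imset_eq_at X Y x y : #|X| = #|Y| -> x \in X -> y \in Y ->
  exists2 p : {perm T}, p @: X = Y & p x = y.
Proof.
move=> eqXY xX yY; have [|p pXY] := @perm_imset_eq (X :\ x) (Y :\ y).
  by move: eqXY; rewrite (cardsD1 x X) (cardsD1 y Y) xX yY => /addnI.
exists (p * tperm (p x) y)%g; last by rewrite permM tpermL.
by rewrite -(setD1K xX) -(setD1K yY) (imset_perm_tperm pXY) ?setD11.
Qed.

Lemma imset_comp_perm (rT : finType) (f : T -> rT) p :
  [set f (p x) | x : T] = [set f x | x : T].
Proof.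
apply/setP => z; apply/imsetP/imsetP => [[x _ ->] | [x _ ->]]; first by exists (p x).
by exists (p^-1 x)%g; rewrite ?permKV.
Qed.

Lemma exists_transversal (rT : finType) (f : T -> rT) u :
  exists X, [/\ u \in X, {in X &, injective f} & #|X| = #|[set f x | x : T]|].
Proof.
pose r w := if f w == f u then u else odflt w [pick z | f z == f w].
have f_r w : f (r w) = f w.
  by rewrite /r; case: eqP => [-> // | _]; case: pickP => [z /eqP | ].
have r_f w w' : f w = f w' -> r w = r w'.
  by rewrite /r => ->; case: ifP => // _; case: pickP => // /(_ w'); rewrite eqxx.
have injX : {in [set r w | w : T] &, injective f}.
  by move=> _ _ /imsetP [w1 _ ->] /imsetP [w2 _ ->]; rewrite !f_r => /r_f.
exists [set r w | w : T]; split => //.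
  by apply/imsetP; exists u; rewrite // /r eqxx.
rewrite -(card_in_imset injX); congr #|pred_of_set _|; apply/setP => z.
apply/imsetP/imsetP => [[_ /imsetP [w _ ->] ->] | [w _ ->]].
  by exists w; rewrite ?f_r.
by exists (r w); rewrite ?f_r ?imset_f.
Qed.

Lemma iter_id_on (f : T -> T) I :
  {in I &, injective f} -> {in I, forall x, f x \in I} ->
  exists2 m, 0 < m & {in I, forall x, iter m f x = x}.
Proof.
move=> injf fI.
have sfI : f @: I \subset I by apply/subsetP => _ /imsetP [x xI ->]; exact: fI.
pose s := perm_in injf sfI; exists #[s]%g; first exact: order_gt0.
move=> x xI; have iterI k : iter k f x \in I by elim: k => //= k /fI.
have iterE k : iter k s x = iter k f x.
  by elim: k => //= k ->; rewrite perm_inE.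
by rewrite -iterE -permX expg_order perm1.
Qed.

Lemma kernel_sub_eq (rT : finType) (f h : T -> rT) :
  #|[set f x | x : T]| <= #|[set h x | x : T]| ->
  (forall u v, f u = f v -> h u = h v) -> forall u v, h u = h v -> f u = f v.
Proof.
move=> le_fh fh u v huv.
pose phi z := h (odflt u [pick x | f x == z]).
have phi_f x : phi (f x) = h x.
  by rewrite /phi; case: pickP => [y /eqP /fh // | /(_ x)]; rewrite eqxx.
have im_phi : phi @: [set f x | x : T] = [set h x | x : T].
  apply/setP => z; apply/imsetP/imsetP => [[_ /imsetP [x _ ->] ->] | [x _ ->]].
    by exists x; rewrite ?phi_f.
  by exists (f x); rewrite ?phi_f ?imset_f.
have /imset_injP inj_phi : #|phi @: [set f x | x : T]| == #|[set f x | x : T]|.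
  by rewrite eqn_leq leq_imset_card im_phi.
by apply: inj_phi; rewrite ?imset_f // !phi_f.
Qed.

Definition update (b : T -> T) x y : T -> T := fun w => if w == x then y else b w.

Lemma update_inj J (b : T -> T) x y :
  {in J :\ x &, injective b} -> y \notin b @: (J :\ x) ->
  {in J &, injective (update b x y)}.
Proof.
move=> binj yb u v uJ vJ; rewrite /update.
have [-> | ux] := eqVneq u x; have [-> | vx] := eqVneq v x => //.
- by move=> ybv; case/negP: yb; rewrite ybv imset_f // !inE vx.
- by move=> buy; case/negP: yb; rewrite -buy imset_f // !inE ux.
- by apply: binj; rewrite !inE ?ux ?vx.
Qed.

(* Points moved inside I count twice, so that redirecting one of them outside I
   decreases the measure. *)
Definition displacement I (b : T -> T) :=
  #|[set i in I | b i != i]| + #|[set i in I | (b i != i) && (b i \in I)]|.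

Lemma displacement_exit I (b : T -> T) i0 :
  {in I &, injective b} -> i0 \in I -> b i0 \notin I ->
  displacement (b i0 |: (I :\ i0)) (update b (b i0) (b i0)) < displacement I b.
Proof.
move=> binj i0I bi0I; have bi0_i0 : b i0 != i0 by apply: contraNneq bi0I => ->.
rewrite /displacement /update -addSn leq_add //.
  rewrite (cardsD1 i0 [set i in I | b i != i]) !inE i0I bi0_i0 ltnS.
  apply/subset_leq_card/subsetP => j; rewrite !inE.
  by case: eqP => [-> | _]; rewrite ?eqxx ?andbF // andbA.
apply/subset_leq_card/subsetP => j; rewrite !inE.
case: eqP => [-> | _]; rewrite ?eqxx //= => /and3P [/andP [ji0 jI] bj].
case/orP => [/eqP /(binj _ _ jI i0I) ji | /andP [_ ->]]; last by rewrite jI bj.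
by rewrite ji eqxx in ji0.
Qed.

Lemma displacement_redirect I (b : T -> T) i0 z :
  i0 \in I -> b i0 \in I -> b i0 != i0 -> z \notin I ->
  displacement I (update b i0 z) < displacement I b.
Proof.
move=> i0I bi0I bi0_i0 zI; rewrite /displacement /update -addnS leq_add //.
  apply/subset_leq_card/subsetP => j; rewrite !inE.
  by case: (eqVneq j i0) => [-> | _]; rewrite ?i0I ?bi0_i0.
rewrite (cardsD1 i0 [set i in I | (b i != i) && (b i \in I)]) !inE i0I bi0_i0 bi0I ltnS.
apply/subset_leq_card/subsetP => j; rewrite !inE.
by case: (eqVneq j i0) => [-> | _]; rewrite ?(negbTE zI) ?andbF.
Qed.

End FiniteSets.

Definition pimage (T : finType) (g : {perm T}) (P : {set {set T}}) : {set {set T}} :=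
  [set [set g x | x in X] | X : {set T} in P].

Section PartitionImages.
Variable T : finType.
Implicit Types (g h : {perm T}) (P : {set {set T}}).

Lemma pimageM g h P : pimage (g * h)%g P = pimage h (pimage g P).
Proof.
rewrite /pimage -imset_comp; apply: eq_imset => X /=.
by rewrite -imset_comp; apply: eq_imset => x; apply: permM.
Qed.

Lemma pimage1 P : pimage 1%g P = P.
Proof.
apply/setP => X; apply/imsetP/idP => [[Y PY ->] | PX]; first by rewrite imset_perm1.
by exists X; rewrite ?imset_perm1.
Qed.

Lemma pimageK g : cancel (pimage g) (pimage g^-1).
Proof. by move=> P; rewrite -pimageM mulgV pimage1. Qed.

Lemma pimageKV g : cancel (pimage g^-1) (pimage g).
Proof. by move=> P; have := pimageK g^-1 P; rewrite invgK. Qed.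

Lemma pimage_seq g (As : seq {set T}) :
  [set [set g x | x in A] | A : {set T} in As] = pimage g [set A in As].
Proof.
apply/setP => Y; apply/imsetP/imsetP => -[A];
  by rewrite ?inE => AA ->; exists A; rewrite ?inE.
Qed.

Lemma set_map_pimage g (As : seq {set T}) :
  [set B in [seq [set g x | x in A] | A : {set T} <- As]] = pimage g [set A in As].
Proof.
apply/setP => Y; rewrite inE; apply/mapP/imsetP => -[A AA ->];
  by exists A; rewrite ?inE in AA *.
Qed.

End PartitionImages.

Section OrderedPartitions.
Variables (n : nat) (lam : seq nat).

Lemma ordered_partition_map (p : {perm 'I_n}) (As : seq {set 'I_n}) :
  ordered_partition_of_type lam As ->
  ordered_partition_of_type lam [seq [set p x | x in A] | A : {set 'I_n} <- As].
Proof.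
case=> szA cardA disjA covA; split; rewrite ?size_map //.
- by move=> i lti; rewrite (nth_map set0) // card_imset ?cardA //; apply: perm_inj.
- move=> i j lti ltj ij; rewrite !(nth_map set0) // imset_disjoint ?disjA //.
  exact: perm_inj.
- move=> x; have [A AA xA] := covA (p^-1 x)%g.
  by exists [set p y | y in A]; [apply: map_f | rewrite -{1}(permKV p x) imset_f].
Qed.

Lemma Sym_lambda_homogeneous : lambda_homogeneous [set: {perm 'I_n}] lam.
Proof.
move=> As Bs [szA cardA disjA covA] [szB cardB disjB _].
have szAB : size As = size Bs by rewrite szA szB.
pose idx (x : 'I_n) := find (fun A : {set 'I_n} => x \in A) As.
have idx_has x : has (fun A : {set 'I_n} => x \in A) As.
  by have [A AA xA] := covA x; apply/hasP; exists A.
have idx_lt x : idx x < size As by rewrite -has_find.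
have idx_mem x : x \in nth set0 As (idx x) := nth_find set0 (idx_has x).
have idx_uniq x j : j < size As -> x \in nth set0 As j -> idx x = j.
  move=> ltj xj; apply/eqP; apply/negPn/negP => ne.
  by have := disjointFr (disjA _ _ (idx_lt x) ltj ne) (idx_mem x); rewrite xj.
pose p i := odflt 1%g
  [pick q : {perm 'I_n} | [set q x | x in nth set0 As i] == nth set0 Bs i].
have pP i : i < size As -> [set p i x | x in nth set0 As i] = nth set0 Bs i.
  move=> lti; rewrite /p; case: pickP => [q /eqP // | none].
  have [|q qAB] := @perm_imset_eq _ (nth set0 As i) (nth set0 Bs i).
    by rewrite cardA ?cardB // -szAB.
  by have := none q; rewrite qAB eqxx.
pose f x := p (idx x) x.
have f_mem x : f x \in nth set0 Bs (idx x) by rewrite -(pP _ (idx_lt x)); apply: imset_f.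
have f_inj : injective f.
  move=> x y fxy; suff eq_idx : idx x = idx y.
    by move: fxy; rewrite /f eq_idx => /perm_inj.
  apply/eqP; apply/negPn/negP => ne; rewrite !szAB in idx_lt.
  by have := disjointFr (disjB _ _ (idx_lt x) (idx_lt y) ne) (f_mem x); rewrite fxy f_mem.
have blk i : i < size As -> [set perm f_inj x | x in nth set0 As i] = nth set0 Bs i.
  move=> lti; rewrite -pP //; apply: eq_in_imset => x xA.
  by rewrite permE /f (idx_uniq x i).
exists (perm f_inj); first by rewrite inE.
apply/setP => Y; rewrite inE; apply/imsetP/idP => [[A AA ->] | YB].
  by rewrite -(nth_index set0 AA) blk ?index_mem // mem_nth // -szAB index_mem.
exists (nth set0 As (index Y Bs)); first by rewrite mem_nth // szAB index_mem.
by rewrite blk ?nth_index // szAB index_mem.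
Qed.

End OrderedPartitions.

Section Transformations.
Variable n : nat.
Implicit Types (f h : tmap n) (g s t : {perm 'I_n}).

Lemma tmulE f h x : tmul f h x = h (f x).
Proof. by rewrite ffunE. Qed.

Lemma perm_tmapE g x : perm_tmap g x = g x.
Proof. by rewrite ffunE. Qed.

Lemma tmulA f h k : tmul f (tmul h k) = tmul (tmul f h) k.
Proof. by apply/ffunP => x; rewrite !tmulE. Qed.

Lemma perm_tmapM g s : tmul (perm_tmap g) (perm_tmap s) = perm_tmap (g * s)%g.
Proof. by apply/ffunP => x; rewrite tmulE !perm_tmapE permM. Qed.

Lemma tmul1f f : tmul (perm_tmap 1%g) f = f.
Proof. by apply/ffunP => x; rewrite tmulE perm_tmapE perm1. Qed.

Lemma tmulf1 f : tmul f (perm_tmap 1%g) = f.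
Proof. by apply/ffunP => x; rewrite tmulE perm_tmapE perm1. Qed.

Lemma iter_tmulE f k x : iter k (tmul f) f x = iter k.+1 f x.
Proof. by elim: k x => // k IH x; rewrite iterS tmulE IH -iterSr. Qed.

Lemma kernel_class f K x : K \in kernel f -> x \in K -> K = [set y | f y == f x].
Proof. by case/imsetP => z _ -> /[!inE] /eqP fxz; apply/setP => y; rewrite !inE fxz. Qed.

Lemma kernel_eqP f h :
  kernel f = kernel h <-> forall u v, (f u == f v) = (h u == h v).
Proof.
split => [Efh u v | Efh]; last first.
  by apply: eq_imset => x; apply/setP => y; rewrite !inE Efh.
have /imsetP [w _ Ew] : [set y | f y == f u] \in kernel h by rewrite -Efh imset_f.
have huw : h u = h w by move/setP/(_ u): Ew; rewrite !inE eqxx => /esym/eqP.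
by move/setP/(_ v): Ew; rewrite !inE eq_sym [h u == _]eq_sym huw.
Qed.

Lemma kernel_perm_tmul f g : kernel (tmul (perm_tmap g) f) = pimage g^-1 (kernel f).
Proof.
apply/setP => K; apply/imsetP/imsetP => [[x _ ->] | [_ /imsetP [x _ ->] ->]].
  exists [set y | f y == f (g x)]; first exact: imset_f.
  by apply/setP => y; rewrite im_permV !inE !tmulE !perm_tmapE.
exists (g^-1 x)%g => //; apply/setP => y.
by rewrite im_permV !inE !tmulE !perm_tmapE permKV.
Qed.

Definition kernel_seq f : seq {set 'I_n} :=
  sort (relpre (fun A : {set 'I_n} => #|A|) geq) (enum (kernel f)).

Lemma kernel_seqE f : [set A in kernel_seq f] = kernel f.
Proof. by apply/setP => A; rewrite inE mem_sort mem_enum. Qed.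

Lemma kernel_seq_partition f : ordered_partition_of_type (kernel_type f) (kernel_seq f).
Proof.
have types : kernel_type f = [seq #|A| | A : {set 'I_n} <- kernel_seq f].
  by rewrite /kernel_type sort_map.
have inK i : i < size (kernel_seq f) -> nth set0 (kernel_seq f) i \in kernel f.
  by move=> lti; rewrite -kernel_seqE inE mem_nth.
rewrite types; split; rewrite ?size_map //.
- by move=> i lti; rewrite (nth_map set0).
- move=> i j lti ltj ij; rewrite -setI_eq0.
  apply/set0Pn => -[x /setIP [xi xj]]; move: ij.
  rewrite -(nth_uniq set0 lti ltj) ?sort_uniq ?enum_uniq //.
  by rewrite (kernel_class (inK _ lti) xi) (kernel_class (inK _ ltj) xj) eqxx.
- move=> x; exists [set y | f y == f x]; last by rewrite inE.
  by rewrite mem_sort mem_enum imset_f.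
Qed.

End Transformations.

Lemma lambda_homogeneousP n (a : tmap n) (G : {group {perm 'I_n}}) :
  lambda_homogeneous G (kernel_type a) <->
  forall s, exists2 g, g \in G &
    kernel (tmul (perm_tmap g) a) = kernel (tmul (perm_tmap s) a).
Proof.
have Ka := kernel_seq_partition a.
split => [lhom s | hom As Bs PA PB].
  have [g gG] := lhom _ _ (ordered_partition_map s^-1 Ka) Ka.
  rewrite pimage_seq set_map_pimage !kernel_seqE => gK.
  by exists g => //; rewrite !kernel_perm_tmul -{1}gK pimageK.
have [p _] := Sym_lambda_homogeneous PA Ka; rewrite pimage_seq kernel_seqE => pA.
have [q _] := Sym_lambda_homogeneous PB Ka; rewrite pimage_seq kernel_seqE => qB.
have [g gG gp] := hom p; have [h hG hq] := hom q.
exists (g * h^-1)%g; first by rewrite groupM ?groupV.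
rewrite pimage_seq; have -> : [set A in As] = kernel (tmul (perm_tmap g) a).
  by rewrite gp kernel_perm_tmul -pA pimageK.
rewrite pimageM kernel_perm_tmul pimageKV -kernel_perm_tmul hq.
by rewrite kernel_perm_tmul -qB pimageK.
Qed.

Section Semigroup.
Variables (n : nat) (a : tmap n).
Implicit Types (f : tmap n) (g s t : {perm 'I_n}).

Lemma sgen_mono (G H : {set {perm 'I_n}}) f : G \subset H -> sgen a G f -> sgen a H f.
Proof.
move=> /subsetP GH; elim=> [|g /GH gH|f1 f2 _ S1 _ S2].
- exact: sgen_a.
- exact: sgen_G.
- exact: sgen_mul.
Qed.

Lemma sgen_perm_a_perm (G : {set {perm 'I_n}}) g t : g \in G -> t \in G ->
  sgen a G (tmul (tmul (perm_tmap g) a) (perm_tmap t)).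
Proof.
move=> gG tG; apply: sgen_mul; last exact: sgen_G.
by apply: sgen_mul; [apply: sgen_G | apply: sgen_a].
Qed.

Lemma sgen_iter (G : {set {perm 'I_n}}) f k :
  sgen a G f -> sgen a G (iter k (tmul f) f).
Proof. by move=> Sf; elim: k => //= k; apply: sgen_mul. Qed.

(* With maps acting on the right, [factors_left G f] says that f = (g a) x and
   [factors_right G f] that f = x (a h) for some x in T_n and g, h in G. *)
Definition factors_left (G : {set {perm 'I_n}}) f :=
  exists2 g, g \in G & forall u v, a (g u) = a (g v) -> f u = f v.

Definition factors_right (G : {set {perm 'I_n}}) f :=
  exists2 h, h \in G & forall u, exists y, f u = h (a y).

Lemma sgen_factors (G : {group {perm 'I_n}}) f :
  sgen a G f -> in_perms G f \/ factors_left G f /\ factors_right G f.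
Proof.
elim=> [|g gG|f1 f2 _ IH1 _ IH2].
- right; split; exists 1%g => //.
    by move=> u v; rewrite !perm1.
  by move=> u; exists u; rewrite perm1.
- by left; exists g.
have left12 : factors_left G f1 \/ factors_left G f2 /\ in_perms G f1 ->
    factors_left G (tmul f1 f2).
  case=> [[g gG Lg] | [[g gG Lg] [p pG ->]]].
    by exists g => // u v /Lg; rewrite !tmulE => ->.
  exists (p * g)%g; first by rewrite groupM.
  by move=> u v; rewrite !permM !tmulE !perm_tmapE => /Lg.
have right12 : factors_right G f2 \/ factors_right G f1 /\ in_perms G f2 ->
    factors_right G (tmul f1 f2).
  case=> [[h hG Rh] | [[h hG Rh] [q qG ->]]].
    by exists h => // u; rewrite tmulE; apply: Rh.
  exists (h * q)%g; first by rewrite groupM.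
  by move=> u; rewrite tmulE perm_tmapE; have [y ->] := Rh u; exists y; rewrite permM.
case: IH1 => [P1 | [L1 R1]]; case: IH2 => [P2 | [L2 R2]].
- case: P1 P2 => [p pG ->] [q qG ->].
  by left; exists (p * q)%g; rewrite ?groupM // perm_tmapM.
- by right; split; [apply: left12; right | apply: right12; left].
- by right; split; [apply: left12; left | apply: right12; right].
- by right; split; [apply: left12; left | apply: right12; left].
Qed.

Lemma nonperm_noninjective :
  ~ in_perms [set: {perm 'I_n}] a -> exists u v, u != v /\ a u = a v.
Proof.
move=> np; have /injectivePn [u [v uv auv]] : ~~ injectiveb a.
  apply/injectiveP => ainj; apply: np; exists (perm ainj); first by rewrite inE.
  by apply/ffunP => x; rewrite perm_tmapE permE.
by exists u, v.
Qed.

Lemma rank_lt_nonperm : ~ in_perms [set: {perm 'I_n}] a -> rank a < n.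
Proof.
move=> /nonperm_noninjective [u [v [uv auv]]]; rewrite /rank.
have -> : [set a x | x : 'I_n] = a @: [set~ v].
  apply/setP => z; apply/imsetP/imsetP => [[x _ ->] | [x _ ->]]; last by exists x.
  have [-> | xv] := eqVneq x v; first by exists u; rewrite ?auv // !inE.
  by exists x; rewrite ?inE.
rewrite (leq_ltn_trans (leq_imset_card _ _)) // cardsC1 card_ord ltn_predL.
exact: leq_ltn_trans (ltn_ord u).
Qed.

Lemma left_factor_nonperm (G H : {set {perm 'I_n}}) f :
  ~ in_perms [set: {perm 'I_n}] a -> factors_left G f -> ~ in_perms H f.
Proof.
move=> /nonperm_noninjective [u [v [uv auv]]] [g _ Lg] [p _ fp].
have : f (g^-1 u)%g = f (g^-1 v)%g by apply: Lg; rewrite !permKV.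
by rewrite fp !perm_tmapE => /perm_inj /perm_inj uv'; rewrite uv' eqxx in uv.
Qed.

Lemma sgen_nonperm (G : {group {perm 'I_n}}) f :
  ~ in_perms [set: {perm 'I_n}] a -> sgen a G f -> ~ in_perms G f ->
  ~ in_perms [set: {perm 'I_n}] f.
Proof. by move=> np /sgen_factors [// | [/(left_factor_nonperm np)]]. Qed.

Lemma Sn_pair_factors (G : {group {perm 'I_n}}) s t :
  ~ in_perms [set: {perm 'I_n}] a -> Sn_pair a G ->
  factors_left G (tmul (tmul (perm_tmap s) a) (perm_tmap t)) /\
  factors_right G (tmul (tmul (perm_tmap s) a) (perm_tmap t)).
Proof.
move=> np pair; set f := tmul _ _.
have [Sf nGf] : sgen a G f /\ ~ in_perms G f.
  apply/pair; split; first by apply: sgen_perm_a_perm; rewrite inE.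
  apply: (left_factor_nonperm (G := [set: {perm 'I_n}]) np).
  by exists s; rewrite ?inE // => u v auv; rewrite !tmulE !perm_tmapE auv.
by case: (sgen_factors Sf).
Qed.

Lemma Sn_pair_k_homogeneous (G : {group {perm 'I_n}}) :
  ~ in_perms [set: {perm 'I_n}] a -> Sn_pair a G -> k_homogeneous G (rank a).
Proof.
move=> np pair.
suff onto (X : {set 'I_n}) : #|X| = rank a ->
    exists2 h, h \in G & [set h x | x in [set a x | x : 'I_n]] = X.
  move=> A B /onto [hA hAG <-] /onto [hB hBG <-].
  exists (hA^-1 * hB)%g; first by rewrite groupM ?groupV.
  by rewrite -imset_comp; apply: eq_imset => x /=; rewrite permM permK.
move=> cX; have [t tX] := perm_imset_eq (esym cX).
have [_ [h hG ht]] := Sn_pair_factors 1%g t np pair.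
exists h => //; apply/eqP; rewrite eq_sym eqEcard card_imset; last exact: perm_inj.
apply/andP; split; last by rewrite cX.
apply/subsetP => z; rewrite -tX => /imsetP [_ /imsetP [u _ ->] ->].
by have [y] := ht u; rewrite !tmulE !perm_tmapE perm1 => ->; rewrite !imset_f.
Qed.

Lemma Sn_pair_lambda_homogeneous (G : {group {perm 'I_n}}) :
  ~ in_perms [set: {perm 'I_n}] a -> Sn_pair a G -> lambda_homogeneous G (kernel_type a).
Proof.
move=> np pair; apply/lambda_homogeneousP => s.
have [[g gG Lg] _] := Sn_pair_factors s 1%g np pair.
have gs u v : a (g u) = a (g v) -> a (s u) = a (s v).
  by move/Lg; rewrite !tmulE !perm_tmapE !perm1.
have sg := kernel_sub_eq _ gs.
exists g => //; apply/kernel_eqP => u v; rewrite !tmulE !perm_tmapE.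
apply/eqP/eqP => [/gs // | /sg]; apply.
by rewrite (imset_comp_perm a g) (imset_comp_perm a s).
Qed.

End Semigroup.

Section Converse.
Variables (n : nat) (a : tmap n) (G : {group {perm 'I_n}}).
Hypotheses (a_nonperm : ~ in_perms [set: {perm 'I_n}] a)
  (khom : k_homogeneous G (rank a)) (lhom : lambda_homogeneous G (kernel_type a)).
Implicit Types (s t : {perm 'I_n}) (I J C : {set 'I_n}) (b : 'I_n -> 'I_n) (f : tmap n).

Lemma exists_notin I : #|I| = rank a -> exists z, z \notin I.
Proof.
move=> cI; have : 0 < #|~: I|.
  have := cardsC I; rewrite cI card_ord => cIC.
  by rewrite -(ltn_add2l (rank a)) cIC addn0 rank_lt_nonperm.
by case/card_gt0P => z; rewrite inE; exists z.
Qed.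

Lemma lambda_homogeneous_kernel s :
  exists2 g, g \in G & forall u v, (a (g u) == a (g v)) = (a (s u) == a (s v)).
Proof.
have [g gG /kernel_eqP gs] := (lambda_homogeneousP a G).1 lhom s.
by exists g => // u v; have := gs u v; rewrite !tmulE !perm_tmapE.
Qed.

Lemma retraction s I :
  #|I| = rank a -> {in I &, injective (fun x => a (s x))} ->
  exists2 e, sgen a G e & forall u v, v \in I -> (e u == v) = (a (s u) == a (s v)).
Proof.
move=> cI inj_as.
have [g gG gs] := lambda_homogeneous_kernel s.
have [h hG hI] := khom (erefl : #|[set a x | x : 'I_n]| = rank a) cI.
pose y := tmul (tmul (perm_tmap g) a) (perm_tmap h).
have yE x : y x = h (a (g x)) by rewrite !tmulE !perm_tmapE.
have yI x : y x \in I by rewrite yE -hI !imset_f.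
have y_ker u v : (y u == y v) = (a (s u) == a (s v)) by rewrite !yE (inj_eq perm_inj) gs.
have y_inj : {in I &, injective y}.
  by move=> i j iI jI /eqP; rewrite y_ker => /eqP /inj_as; apply.
(* y = g a h has the kernel of s a and image I, so it permutes I and one of its
   powers is the identity on I. *)
have [m m_gt0 y_id] := iter_id_on y_inj (fun x _ => yI x).
have as_onto u : exists2 i, i \in I & a (s i) = a (s u).
  have : a (s u) \in [set a (s x) | x in I].
    suff -> : [set a (s x) | x in I] = [set a x | x : 'I_n] by apply: imset_f.
    apply/eqP; rewrite eqEcard card_in_imset // cI leqnn andbT.
    by apply/subsetP => _ /imsetP [x _ ->]; apply: imset_f.
  by case/imsetP => i iI ->; exists i.
exists (iter m.-1 (tmul y) y); first exact/sgen_iter/sgen_perm_a_perm.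
move=> u v vI; have [i iI isu] := as_onto u.
have /eqP yui : y u == y i by rewrite y_ker isu.
rewrite iter_tmulE prednK // -isu (inj_in_eq inj_as) // -(y_id i iI).
by rewrite -(prednK m_gt0) !iterSr yui.
Qed.

Definition realizable I b :=
  exists2 w, sgen a G w & {in I, forall i, w i = b i}.

Lemma realizable_comp I J b1 b2 b :
  {in I, forall i, b1 i \in J /\ b2 (b1 i) = b i} ->
  realizable I b1 -> realizable J b2 -> realizable I b.
Proof.
move=> b12 [w1 S1 E1] [w2 S2 E2]; exists (tmul w1 w2); first exact: sgen_mul.
by move=> i iI; have [b1J <-] := b12 i iI; rewrite tmulE E1 ?E2.
Qed.

Lemma realizable_fix I b : #|I| = rank a -> {in I, forall i, b i = i} -> realizable I b.
Proof.
move=> cI bI; have [u _] := nonperm_noninjective a_nonperm.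
have [T [_ injT cT]] := exists_transversal a u.
have [s sIT] := @perm_imset_eq _ I T (etrans cI (esym cT)).
have sT i : i \in I -> s i \in T by move=> iI; rewrite -sIT imset_f.
have inj_as : {in I &, injective (fun x => a (s x))}.
  by move=> i j iI jI /(injT _ _ (sT i iI) (sT j jI)) /perm_inj.
have [e Se eI] := retraction cI inj_as.
by exists e => // i iI; rewrite bI //; apply/eqP; rewrite eI.
Qed.

Lemma realizable_move C x y :
  #|C|.+1 = rank a -> x \notin C -> y \notin C -> x != y ->
  realizable (x |: C) (update id x y).
Proof.
move=> cC xC yC xy.
have [u0 [v0 [uv0 auv0]]] := nonperm_noninjective a_nonperm.
have [T [u0T injT cT]] := exists_transversal a u0.
have v0T : v0 \notin T by apply/negP => v0T; rewrite (injT _ _ u0T v0T auv0) eqxx in uv0.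
have cJ : #|y |: C| = #|T| by rewrite cT cardsU1 yC.
have [p pJT pyu] := perm_imset_eq_at cJ (setU11 y C) u0T.
have pT j : j \in y |: C -> p j \in T by move=> jJ; rewrite -pJT imset_f.
have xJ : x \notin y |: C by rewrite !inE negb_or xy.
pose s := (p * tperm (p x) v0)%g.
have sJ j : j \in y |: C -> s j = p j.
  move=> jJ; rewrite permM tpermD // ?(inj_eq perm_inj).
    by apply: contraNneq xJ => ->.
  by apply: contraNneq v0T => ->; apply: pT.
have inj_as : {in y |: C &, injective (fun z => a (s z))}.
  by move=> i j iJ jJ; rewrite /= !sJ // => /(injT _ _ (pT i iJ) (pT j jJ)) /perm_inj.
have [e Se eJ] := retraction (etrans cJ cT) inj_as.
exists e => // z; rewrite /update !inE => /orP [/eqP -> | zC].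
  rewrite eqxx; apply/eqP; rewrite eJ ?setU11 // (sJ y (setU11 y C)) pyu.
  by rewrite permM tpermL auv0.
have -> : (z == x) = false by apply: contraNF xC => /eqP <-.
by apply/eqP; rewrite eJ ?eqxx // inE zC orbT.
Qed.

Lemma realizable_inj I b : #|I| = rank a -> {in I &, injective b} -> realizable I b.
Proof.
have [m] := ubnP (displacement I b); elim: m I b => // m IH I b.
rewrite ltnS => le_m cI binj.
have IH' J c : displacement J c < displacement I b -> #|J| = rank a ->
    {in J &, injective c} -> realizable J c.
  by move=> lt_c; apply: IH; apply: leq_trans lt_c le_m.
have cD i : i \in I -> #|I :\ i|.+1 = rank a by move=> iI; rewrite -cI (cardsD1 i I) iI.
have binjD i : {in I :\ i &, injective b}.
  by move=> u v /setD1P [_ uI] /setD1P [_ vI]; apply: binj.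
(* Either b sends some i0 out of I: move i0 to b i0 first; or b permutes I: send a
   moved i0 to a point z outside I instead, and move z to b i0 afterwards. *)
case: (pickP [pred i in I | b i \notin I]) => [i0 /andP [i0I bi0I] | inI].
  have bi0D : b i0 \notin I :\ i0 by rewrite !inE negb_and bi0I orbT.
  apply: (realizable_comp (J := b i0 |: (I :\ i0)) (b1 := update id i0 (b i0))
                          (b2 := update b (b i0) (b i0))).
  - move=> i iI; rewrite /update.
    have [-> | ii0] := eqVneq i i0; first by rewrite eqxx setU11.
    rewrite !inE ii0 iI orbT ifN //; apply: contraNneq bi0I => <-; exact: iI.
  - rewrite -{1}(setD1K i0I); apply: realizable_move; rewrite ?cD ?setD11 //.
    by apply: contraNneq bi0I => <-.
  apply: IH'; first exact: displacement_exit.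
    by rewrite cardsU1 bi0D add1n cD.
  apply: update_inj; rewrite setU1K //.
  apply/negP => /imsetP [i /setD1P [ii0 iI] bii0].
  by rewrite (binj _ _ i0I iI bii0) eqxx in ii0.
have bI i : i \in I -> b i \in I by move=> iI; move: (inI i); rewrite /= iI => /negbFE.
case: (pickP [pred i in I | b i != i]) => [i0 /andP [i0I bi0] | fixed]; last first.
  apply: realizable_fix => // i iI.
  by apply/eqP; move: (fixed i); rewrite /= iI => /negbFE.
have [z zI] := exists_notin cI.
apply: (realizable_comp (J := z |: (I :\ b i0)) (b1 := update b i0 z)
                        (b2 := update id z (b i0))).
- move=> i iI; rewrite /update.
  have [-> | ii0] := eqVneq i i0; first by rewrite !eqxx setU11.
  have zbi : (b i == z) = false by apply: contraNF zI => /eqP <-; apply: bI.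
  split; last by rewrite zbi.
  by rewrite !inE zbi /= (inj_in_eq binj) // ii0 bI.
- apply: IH' => //; first exact: displacement_redirect i0I (bI _ i0I) bi0 zI.
  apply: update_inj; first exact: binjD.
  apply: contra zI => /imsetP [i /setD1P [_ iI] ->]; exact: bI.
apply: realizable_move; rewrite ?cD ?bI ?setD11 //; first by rewrite !inE negb_and zI orbT.
by apply: contraNneq zI => ->; apply: bI.
Qed.

Lemma sgen_factor_through_a f :
  (forall u v, (a u == a v) = (f u == f v)) -> exists2 w, sgen a G w & f = tmul a w.
Proof.
move=> af; pose beta z := f (odflt z [pick x | a x == z]).
have beta_a u : beta (a u) = f u.
  rewrite /beta; case: pickP => [x /eqP | /(_ u)]; last by rewrite eqxx.
  by move/eqP; rewrite af => /eqP.
have [|w Sw wE] := @realizable_inj [set a x | x : 'I_n] beta erefl.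
  move=> _ _ /imsetP [u _ ->] /imsetP [v _ ->].
  by rewrite !beta_a => /eqP; rewrite -af => /eqP.
by exists w => //; apply/ffunP => u; rewrite tmulE wE ?imset_f ?beta_a.
Qed.

Lemma sgen_Sym_perm_a_perm s t : sgen a G (tmul (tmul (perm_tmap s) a) (perm_tmap t)).
Proof.
have [g gG gs] := lambda_homogeneous_kernel s.
pose f := tmul (perm_tmap g^-1) (tmul (tmul (perm_tmap s) a) (perm_tmap t)).
have [w Sw fE] : exists2 w, sgen a G w & f = tmul a w.
  apply: sgen_factor_through_a => u v.
  by rewrite !tmulE !perm_tmapE (inj_eq perm_inj) -gs !permKV.
have -> : tmul (tmul (perm_tmap s) a) (perm_tmap t) = tmul (perm_tmap g) f.
  by rewrite tmulA perm_tmapM mulgV tmul1f.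
rewrite fE tmulA; apply: sgen_mul Sw.
by apply: sgen_mul; [apply: sgen_G | apply: sgen_a].
Qed.

End Converse.

Lemma sgen_Sym_perm_or_sgen n (a : tmap n) (G : {set {perm 'I_n}}) f :
  (forall s t : {perm 'I_n}, sgen a G (tmul (tmul (perm_tmap s) a) (perm_tmap t))) ->
  sgen a [set: {perm 'I_n}] f -> in_perms [set: {perm 'I_n}] f \/ sgen a G f.
Proof.
move=> Sat Sf; suff : in_perms [set: {perm 'I_n}] f \/
    forall p q, sgen a G (tmul (tmul (perm_tmap p) f) (perm_tmap q)).
  by case=> [|Sf']; [left | right; have := Sf' 1%g 1%g; rewrite tmul1f tmulf1].
elim: Sf => [|g _|f1 f2 _ IH1 _ IH2]; [by right; apply: Sat | by left; exists g | ].
case: IH1 IH2 => [[p _ ->] | S1] [[q _ ->] | S2].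
- by left; exists (p * q)%g; rewrite ?inE ?perm_tmapM.
- by right => p' q'; rewrite tmulA perm_tmapM; apply: S2.
- by right => p' q'; rewrite tmulA -tmulA perm_tmapM; apply: S1.
right => p q; have -> : tmul (tmul (perm_tmap p) (tmul f1 f2)) (perm_tmap q) =
    tmul (tmul (tmul (perm_tmap p) f1) (perm_tmap 1%g))
         (tmul (tmul (perm_tmap 1%g) f2) (perm_tmap q)).
  by rewrite tmulf1 tmul1f !tmulA.
exact: sgen_mul.
Qed.

Theorem theorem5p3 (n : nat) (a : tmap n) (G : {group {perm 'I_n}}) :
  ~ in_perms [set: {perm 'I_n}] a ->
  (Sn_pair a G <->
   k_homogeneous G (rank a) /\ lambda_homogeneous G (kernel_type a)).
Proof.
move=> np; split => [pair | [khom lhom] f].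
  by split; [exact: Sn_pair_k_homogeneous | exact: Sn_pair_lambda_homogeneous].
split => [[Sf nGf] | [Sf nSf]].
  by split; [exact: sgen_mono (subsetT G) Sf | exact: sgen_nonperm np Sf nGf].
have [// | SGf] := sgen_Sym_perm_or_sgen (sgen_Sym_perm_a_perm np khom lhom) Sf.
by split => // -[g _ fg]; apply: nSf; exists g; rewrite ?inE.
Qed.
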